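(* Let $\mathcal{V}^{WF}$ be the set of well-formed views. The relation $\prec$ on views, restricted to $\mathcal{V}^{WF}$, is a causality relation, i.e. a strict partial order: (i) for all $v_1,v_2,v_3\in\mathcal{V}^{WF}$, if $v_1\prec v_2$ and $v_2\prec v_3$ then $v_1\prec v_3$; (ii) for all $v\in\mathcal{V}^{WF}$, $\neg(v\prec v)$; (iii) for all $v_1,v_2\in\mathcal{V}^{WF}$, if $v_1\prec v_2$ then $\neg(v_2\prec v_1)$.
   Context: A view is a record $v=(\mathrm{sp}(v),\mathrm{wp}(v),\mathrm{mode}(v))$ with $\mathrm{sp}(v),\mathrm{wp}(v)\in\mathbb{N}$ (the signal phase and wait phase) and $\mathrm{mode}(v)\in\{\mathtt{SW},\mathtt{SO},\mathtt{WO}\}$ (signal-wait, signal-only, wait-only). Write $\mathrm{CanSignal}(v)$ iff $\mathrm{mode}(v)\in\{\mathtt{SW},\mathtt{SO}\}$ and $\mathrm{CanWait}(v)$ iff $\mathrm{mode}(v)\in\{\mathtt{SW},\mathtt{WO}\}$. A view $v$ is well-formed if one of the following holds: (a) $\mathrm{CanWait}(v)$ and $\mathrm{wp}(v)=\mathrm{sp}(v)$; (b) $\mathrm{CanWait}(v)$ and $\mathrm{wp}(v)+1=\mathrm{sp}(v)$; (c) $\mathrm{mode}(v)=\mathtt{SO}$ and $\mathrm{wp}(v)\le\mathrm{sp}(v)$. The happens-before relation on views is defined by $v_1\prec v_2$ iff $\mathrm{CanSignal}(v_1)$, $\mathrm{sp}(v_1)<\mathrm{wp}(v_2)$, and $\mathrm{CanWait}(v_2)$.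 *)

From Stdlib Require Import Arith Lia.

Inductive mode : Type := SW | SO | WO.

Record view : Type := mkView { sp : nat; wp : nat; vmode : mode }.

Definition CanSignal (v : view) : Prop := vmode v = SW \/ vmode v = SO.
Definition CanWait (v : view) : Prop := vmode v = SW \/ vmode v = WO.

Definition well_formed (v : view) : Prop :=
  (CanWait v /\ wp v = sp v) \/
  (CanWait v /\ wp v + 1 = sp v) \/
  (vmode v = SO /\ wp v <= sp v).

Definition hb (v1 v2 : view) : Prop :=
  CanSignal v1 /\ sp v1 < wp v2 /\ CanWait v2.

From Stdlib Require Import Arith Lia.

(* On well-formed views the wait phase never exceeds the signal phase, so
   [v1 ≺ v2] forces [sp v1 < wp v2 <= sp v2]: the signal phase strictly
   increases along ≺.  Irreflexivity and asymmetry follow at once, and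
   transitivity only needs [sp v1 < sp v2 < wp v3]. *)

Lemma wf_wp_le_sp (v : view) : well_formed v -> wp v <= sp v.
Proof. intros [[_ H] | [[_ H] | [_ H]]]; lia. Qed.

Lemma hb_sp_lt (v1 v2 : view) : well_formed v2 -> hb v1 v2 -> sp v1 < sp v2.
Proof.
  intros W2 [_ [Hlt _]].
  pose proof (wf_wp_le_sp v2 W2). lia.
Qed.

Lemma hb_trans (v1 v2 v3 : view) :
  well_formed v2 -> hb v1 v2 -> hb v2 v3 -> hb v1 v3.
Proof.
  intros W2 H12 H23.
  pose proof (hb_sp_lt v1 v2 W2 H12) as Hsp.
  destruct H12 as [Sig1 _], H23 as [_ [Hlt Wait3]].
  repeat split; [exact Sig1 | lia | exact Wait3].
Qed.

Lemma hb_irrefl (v : view) : well_formed v -> ~ hb v v.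
Proof. intros W H. pose proof (hb_sp_lt v v W H). lia. Qed.

Lemma hb_asym (v1 v2 : view) :
  well_formed v1 -> well_formed v2 -> hb v1 v2 -> ~ hb v2 v1.
Proof.
  intros W1 W2 H12 H21.
  pose proof (hb_sp_lt v1 v2 W2 H12).
  pose proof (hb_sp_lt v2 v1 W1 H21). lia.
Qed.

Theorem lemma1 :
  (forall v1 v2 v3 : view, well_formed v1 -> well_formed v2 -> well_formed v3 ->
     hb v1 v2 -> hb v2 v3 -> hb v1 v3) /\
  (forall v : view, well_formed v -> ~ hb v v) /\
  (forall v1 v2 : view, well_formed v1 -> well_formed v2 ->
     hb v1 v2 -> ~ hb v2 v1).
Proof.
  split; [| split].
  - intros v1 v2 v3 _ W2 _. exact (hb_trans v1 v2 v3 W2).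
  - exact hb_irrefl.
  - exact hb_asym.
Qed.
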